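(* Let $\lambda\neq0$ be a constant and let $\phi(x,t)$ be a smooth function with $\phi_x\neq0$ on a connected open domain satisfying $\{\phi;x\}_t+\frac4\lambda\big(\frac{\phi_t}{\phi_x}\big)_x=0$. Set $p=\frac{\phi_t}{\lambda\phi_x}$ and $U=\frac12\{\phi;x\}+\frac1\lambda$. Then a function $V(x,t)$ solves $$V_{xx}+\Big(U-\frac1\lambda\Big)V=0,\qquad V_t=\lambda\Big(pV_x-\frac12 p_xV\Big)$$ if and only if $V=\dfrac{A\phi+B}{\sqrt{\phi_x}}$ for constants $A,B$ (fixed smooth branch of the square root); the nontrivial solutions correspond to $(A,B)\neq(0,0)$.
   Context: The Schwarzian derivative of a function $\phi(x,t)$ with $\phi_x\neq0$ is $\{\phi;x\}=\frac{\phi_{xxx}}{\phi_x}-\frac32\frac{\phi_{xx}^2}{\phi_x^2}$. All functions are smooth. *)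

From Stdlib Require Import Reals List.
From Coquelicot Require Import Coquelicot.
Open Scope R_scope.

Definition dx (f : R -> R -> R) : R -> R -> R :=
  fun x t => Derive (fun y => f y t) x.
Definition dt (f : R -> R -> R) : R -> R -> R :=
  fun x t => Derive (fun s => f x s) t.

Fixpoint iter_pd (l : list bool) (f : R -> R -> R) : R -> R -> R :=
  match l with
  | nil => f
  | b :: l' => (if b then dx else dt) (iter_pd l' f)
  end.

Definition open2 (D : R -> R -> Prop) : Prop :=
  forall x t, D x t -> exists eps : R, 0 < eps /\
    forall x' t', Rabs (x' - x) < eps -> Rabs (t' - t) < eps -> D x' t'.

Definition connected2 (D : R -> R -> Prop) : Prop :=
  forall U1 U2 : R -> R -> Prop, open2 U1 -> open2 U2 ->
    (forall x t, D x t -> U1 x t \/ U2 x t) ->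
    (forall x t, D x t -> U1 x t -> U2 x t -> False) ->
    (exists x t, D x t /\ U1 x t) ->
    (exists x t, D x t /\ U2 x t) -> False.

Definition smooth_on (D : R -> R -> Prop) (f : R -> R -> R) : Prop :=
  forall (l : list bool) x t, D x t ->
    ex_derive (fun y => iter_pd l f y t) x /\
    ex_derive (fun s => iter_pd l f x s) t /\
    filterlim (fun z : R * R => iter_pd l f (fst z) (snd z))
      (locally (x, t)) (locally (iter_pd l f x t)).

Definition schwarzian (phi : R -> R -> R) : R -> R -> R :=
  fun x t => dx (dx (dx phi)) x t / dx phi x t
             - 3 / 2 * (dx (dx phi) x t / dx phi x t) ^ 2.

From Stdlib Require Import Reals List Lra.
From Coquelicot Require Import Coquelicot.
Open Scope R_scope.

(* The functions (A phi + B) / sqrt |phi_x| solve both equations of the Lax pair for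
   every A, B, by direct computation.  The Wronskian of two solutions has vanishing x- and
   t-derivatives, hence is constant on the connected domain; since the Wronskian of
   1 / sqrt |phi_x| and phi / sqrt |phi_x| is phi_x / |phi_x| <> 0, every solution is a linear
   combination of these two.  Uniqueness of (A, B) follows from A phi_x = 0. *)

Lemma iter_pd_app (l1 l2 : list bool) (f : R -> R -> R) :
  iter_pd l1 (iter_pd l2 f) = iter_pd (l1 ++ l2) f.
Proof. induction l1 as [|b l IH]; simpl; [reflexivity | now rewrite IH]. Qed.

Lemma smooth_on_iter_pd D f l : smooth_on D f -> smooth_on D (iter_pd l f).
Proof. intros Hf l' x t Hd. rewrite iter_pd_app. now apply Hf. Qed.

Lemma smooth_on_dx D f : smooth_on D f -> smooth_on D (dx f).
Proof. exact (smooth_on_iter_pd D f (true :: nil)). Qed.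

Lemma smooth_on_dt D f : smooth_on D f -> smooth_on D (dt f).
Proof. exact (smooth_on_iter_pd D f (false :: nil)). Qed.

Lemma smooth_on_ex_derive_x D f x t :
  smooth_on D f -> D x t -> ex_derive (fun y => f y t) x.
Proof. intros Hf Hd. exact (proj1 (Hf nil x t Hd)). Qed.

Lemma smooth_on_ex_derive_t D f x t :
  smooth_on D f -> D x t -> ex_derive (fun s => f x s) t.
Proof. intros Hf Hd. exact (proj1 (proj2 (Hf nil x t Hd))). Qed.

Lemma open2_locally_2d D x t : open2 D -> D x t -> locally_2d D x t.
Proof.
  intros HD Hd. destruct (HD x t Hd) as [eps [Heps Hball]].
  now exists (mkposreal eps Heps).
Qed.

Lemma open2_locally_x D x t : open2 D -> D x t -> locally x (fun y => D y t).
Proof. intros; now apply locally_2d_1d_const_y, open2_locally_2d. Qed.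

Lemma open2_locally_t D x t : open2 D -> D x t -> locally t (fun s => D x s).
Proof. intros; now apply locally_2d_1d_const_x, open2_locally_2d. Qed.

Lemma dx_open_ext D f g x t : open2 D -> D x t ->
  (forall y, D y t -> f y t = g y) -> dx f x t = Derive g x.
Proof.
  intros HD Hd Hfg. apply Derive_ext_loc.
  apply filter_imp with (2 := open2_locally_x D x t HD Hd). exact Hfg.
Qed.

Lemma dt_open_ext D f g x t : open2 D -> D x t ->
  (forall s, D x s -> f x s = g s) -> dt f x t = Derive g t.
Proof.
  intros HD Hd Hfg. apply Derive_ext_loc.
  apply filter_imp with (2 := open2_locally_t D x t HD Hd). exact Hfg.
Qed.

Lemma smooth_on_dx_dt D f x t : open2 D -> smooth_on D f -> D x t ->
  dx (dt f) x t = dt (dx f) x t.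
Proof.
  intros HD Hf Hd. apply Schwarz.
  - destruct (open2_locally_2d D x t HD Hd) as [d Hball]. exists d.
    intros u v Hu Hv. specialize (Hball u v Hu Hv).
    repeat split.
    + exact (proj1 (Hf nil u v Hball)).
    + exact (proj1 (proj2 (Hf nil u v Hball))).
    + exact (proj1 (Hf (false :: nil) u v Hball)).
    + exact (proj1 (proj2 (Hf (true :: nil) u v Hball))).
  - apply continuity_2d_pt_filterlim.
    exact (proj2 (proj2 (Hf (true :: false :: nil) x t Hd))).
  - apply continuity_2d_pt_filterlim.
    exact (proj2 (proj2 (Hf (false :: true :: nil) x t Hd))).
Qed.

Lemma open2_locally_constant D h x0 t0 : open2 D -> D x0 t0 ->
  (forall x t, D x t -> is_derive (fun y => h y t) x 0 /\ is_derive (fun s => h x s) t 0) ->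
  exists eps, 0 < eps /\ forall x t, Rabs (x - x0) < eps -> Rabs (t - t0) < eps ->
    D x t /\ h x t = h x0 t0.
Proof.
  intros HD H0 Hh. destruct (HD x0 t0 H0) as [eps [Heps Hball]].
  exists eps; split; [exact Heps|]. intros x t Hx Ht. split; [now apply Hball|].
  (* mean value theorem along (x0,t0) -> (x0,t) -> (x,t) *)
  destruct (MVT_cor4 (fun y => h y t) (fun _ => 0) x0 (Rabs (x - x0))) with (b := x)
    as [c [Hc _]]; [intros c Hc; apply (Hh c t), Hball; lra | lra |].
  destruct (MVT_cor4 (fun s => h x0 s) (fun _ => 0) t0 (Rabs (t - t0))) with (b := t)
    as [c' [Hc' _]]; [intros c' Hc'; apply (Hh x0 c'), Hball; rewrite ?Rminus_diag, ?Rabs_R0; lra | lra |].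
  simpl in Hc, Hc'. lra.
Qed.

Lemma connected2_constant D h x0 t0 : open2 D -> connected2 D ->
  (forall x t, D x t -> is_derive (fun y => h y t) x 0 /\ is_derive (fun s => h x s) t 0) ->
  D x0 t0 -> forall x t, D x t -> h x t = h x0 t0.
Proof.
  intros HD Hconn Hh H0 x t Hd.
  destruct (Req_dec (h x t) (h x0 t0)) as [E|E]; [exact E|exfalso].
  apply (Hconn (fun x t => D x t /\ h x t = h x0 t0) (fun x t => D x t /\ h x t <> h x0 t0)).
  1, 2: intros u v [Hu Huv];
    destruct (open2_locally_constant D h u v HD Hu Hh) as [e [He Hball]];
    exists e; split; [exact He|]; intros u' v' H1 H2;
    destruct (Hball u' v' H1 H2) as [Hd' Hc]; split; [exact Hd'|]; congruence.
  - intros u v Hu. destruct (Req_dec (h u v) (h x0 t0)); auto.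
  - intros u v _ [_ A] [_ B]; auto.
  - now exists x0, t0.
  - now exists x, t.
Qed.

Lemma ex_derive_x_open_ext D f g x t : open2 D -> D x t ->
  (forall y, D y t -> g y = f y t) -> ex_derive (V := R_NormedModule) g x ->
  ex_derive (fun y => f y t) x.
Proof.
  intros HD Hd Hfg. apply ex_derive_ext_loc.
  apply filter_imp with (2 := open2_locally_x D x t HD Hd). exact Hfg.
Qed.

Lemma ex_derive_t_open_ext D f g x t : open2 D -> D x t ->
  (forall s, D x s -> g s = f x s) -> ex_derive (V := R_NormedModule) g t ->
  ex_derive (fun s => f x s) t.
Proof.
  intros HD Hd Hfg. apply ex_derive_ext_loc.
  apply filter_imp with (2 := open2_locally_t D x t HD Hd). exact Hfg.
Qed.

Ltac real_eq := match goal with |- ?a = ?b => change (@eq R a b) end.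

Definition lax_eqs (D : R -> R -> Prop) (k p : R -> R -> R) (lam : R) (V : R -> R -> R) :=
  forall x t, D x t ->
    dx (dx V) x t + k x t * V x t = 0 /\
    dt V x t = lam * (p x t * dx V x t - / 2 * dx p x t * V x t).

Definition lax_regular (D : R -> R -> Prop) (V : R -> R -> R) :=
  forall x t, D x t ->
    ex_derive (fun y => V y t) x /\ ex_derive (fun y => dx V y t) x /\
    ex_derive (fun s => V x s) t /\ ex_derive (fun s => dx V x s) t /\
    dt (dx V) x t = dx (dt V) x t.

Definition wronskian (V W : R -> R -> R) : R -> R -> R :=
  fun x t => V x t * dx W x t - dx V x t * W x t.

Lemma smooth_on_lax_regular D V : open2 D -> smooth_on D V -> lax_regular D V.
Proof.
  intros HD HV x t Hd. repeat split.
  - now apply (smooth_on_ex_derive_x D).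
  - apply (smooth_on_ex_derive_x D (dx V)); auto using smooth_on_dx.
  - now apply (smooth_on_ex_derive_t D).
  - apply (smooth_on_ex_derive_t D (dx V)); auto using smooth_on_dx.
  - symmetry. now apply (smooth_on_dx_dt D).
Qed.

Lemma lax_eqs_open_ext D k p lam V W : open2 D ->
  (forall x t, D x t -> V x t = W x t) -> lax_eqs D k p lam W -> lax_eqs D k p lam V.
Proof.
  intros HD HVW HW x t Hd.
  assert (Hx : forall x t, D x t -> dx V x t = dx W x t).
  { intros u v Hu. exact (dx_open_ext D V (fun y => W y v) u v HD Hu (fun y Hy => HVW y v Hy)). }
  rewrite (dx_open_ext D (dx V) (fun y => dx W y t)) by auto.
  rewrite (dt_open_ext D V (fun s => W x s)) by auto.
  rewrite Hx, HVW by auto. exact (HW x t Hd).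
Qed.

Lemma lax_eqs_coeff_ext D k k' p lam V :
  (forall x t, D x t -> k x t = k' x t) -> lax_eqs D k p lam V -> lax_eqs D k' p lam V.
Proof. intros Hk HV x t Hd. rewrite <- Hk by exact Hd. exact (HV x t Hd). Qed.

Section Wronskian.
Variables (D : R -> R -> Prop) (k p : R -> R -> R) (lam : R).
Hypothesis HD : open2 D.
Hypothesis Hp : forall x t, D x t ->
  ex_derive (fun y => p y t) x /\ ex_derive (fun y => dx p y t) x.

Lemma lax_dx_dt V x t : lax_regular D V -> lax_eqs D k p lam V -> D x t ->
  dx (dt V) x t = lam * (dx p x t * dx V x t + p x t * dx (dx V) x t
     - / 2 * dx (dx p) x t * V x t - / 2 * dx p x t * dx V x t).
Proof.
  intros Hreg Heqs Hd.
  rewrite (dx_open_ext D (dt V) (fun y => lam * (p y t * dx V y t - / 2 * dx p y t * V y t)))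
    by (auto; intros y Hy; exact (proj2 (Heqs y t Hy))).
  destruct (Hreg x t Hd) as [V1 [V2 _]]. destruct (Hp x t Hd) as [P1 P2].
  apply is_derive_unique. auto_derive; [repeat split; auto|]. unfold dx. ring.
Qed.

Lemma wronskian_derive_zero V W x t :
  lax_regular D V -> lax_eqs D k p lam V -> lax_regular D W -> lax_eqs D k p lam W -> D x t ->
  is_derive (fun y => wronskian V W y t) x 0 /\ is_derive (fun s => wronskian V W x s) t 0.
Proof.
  intros RV EV RW EW Hd.
  pose proof (lax_dx_dt V x t RV EV Hd) as DV.
  pose proof (lax_dx_dt W x t RW EW Hd) as DW.
  destruct (RV x t Hd) as [v1 [v2 [v3 [v4 v5]]]], (EV x t Hd) as [v6 v7].
  destruct (RW x t Hd) as [w1 [w2 [w3 [w4 w5]]]], (EW x t Hd) as [w6 w7].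
  unfold wronskian. split.
  - auto_derive; [repeat split; auto|].
    fold (dx V x t) (dx W x t) (dx (dx V) x t) (dx (dx W) x t).
    replace (dx (dx V) x t) with (- k x t * V x t) by lra.
    replace (dx (dx W) x t) with (- k x t * W x t) by lra.
    ring.
  - auto_derive; [repeat split; auto|].
    fold (dt V x t) (dt W x t) (dt (dx V) x t) (dt (dx W) x t).
    rewrite v5, w5, DV, DW, v7, w7.
    replace (dx (dx V) x t) with (- k x t * V x t) by lra.
    replace (dx (dx W) x t) with (- k x t * W x t) by lra.
    real_eq.
    lra.
Qed.

Hypothesis Hconn : connected2 D.

Lemma wronskian_constant V W x0 t0 :
  lax_regular D V -> lax_eqs D k p lam V -> lax_regular D W -> lax_eqs D k p lam W ->
  D x0 t0 -> forall x t, D x t -> wronskian V W x t = wronskian V W x0 t0.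
Proof.
  intros RV EV RW EW. apply (connected2_constant D); auto.
  intros x t Hd. now apply wronskian_derive_zero.
Qed.

Lemma lax_solution_span V V1 V2 x0 t0 :
  lax_regular D V -> lax_eqs D k p lam V ->
  lax_regular D V1 -> lax_eqs D k p lam V1 ->
  lax_regular D V2 -> lax_eqs D k p lam V2 ->
  D x0 t0 -> wronskian V1 V2 x0 t0 <> 0 ->
  exists a b, forall x t, D x t -> V x t = a * V1 x t + b * V2 x t.
Proof.
  intros RV EV R1 E1 R2 E2 H0 Hw.
  exists (wronskian V V2 x0 t0 / wronskian V1 V2 x0 t0),
         (- wronskian V V1 x0 t0 / wronskian V1 V2 x0 t0).
  intros x t Hd.
  rewrite <- (wronskian_constant V V2 x0 t0 RV EV R2 E2 H0 x t Hd),
    <- (wronskian_constant V V1 x0 t0 RV EV R1 E1 H0 x t Hd).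
  rewrite <- (wronskian_constant V1 V2 x0 t0 R1 E1 R2 E2 H0 x t Hd) in Hw |- *.
  (* V W(V1,V2) = W(V,V2) V1 - W(V,V1) V2 holds for any functions *)
  unfold wronskian in *. field. exact Hw.
Qed.
End Wronskian.

(* The form in which [auto_derive]'s [sign] stays rational in [sqrt (Rabs a)]. *)
Lemma sign_sqrt_abs a : a <> 0 -> sign a = sqrt (Rabs a) * sqrt (Rabs a) / a.
Proof.
  intros Ha. rewrite sqrt_sqrt by apply Rabs_pos. unfold sign.
  destruct (total_order_T 0 a) as [[h|h]|h].
  - rewrite Rabs_pos_eq by lra. now field.
  - lra.
  - rewrite Rabs_left by lra. now field.
Qed.

Lemma sqrt_abs_pos a : a <> 0 -> 0 < sqrt (Rabs a).
Proof. intros Ha. now apply sqrt_lt_R0, Rabs_pos_lt. Qed.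

Definition schwarz_sol (phi : R -> R -> R) (A B : R) : R -> R -> R :=
  fun x t => (A * phi x t + B) / sqrt (Rabs (dx phi x t)).

Section SchwarzSolutions.
Variables (D : R -> R -> Prop) (phi : R -> R -> R).
Hypothesis HD : open2 D.
Hypothesis Hphi : smooth_on D phi.
Hypothesis Hphix : forall x t, D x t -> dx phi x t <> 0.

Lemma phi_ex_derive_x l x t : D x t -> ex_derive (fun y => iter_pd l phi y t) x.
Proof. intros Hd. exact (proj1 (Hphi l x t Hd)). Qed.

Lemma phi_ex_derive_t l x t : D x t -> ex_derive (fun s => iter_pd l phi x s) t.
Proof. intros Hd. exact (proj1 (proj2 (Hphi l x t Hd))). Qed.

Ltac derivable_side Hd :=
  repeat split;
  repeat first
  [ exact (phi_ex_derive_x nil _ _ Hd)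
  | exact (phi_ex_derive_x (true :: nil) _ _ Hd)
  | exact (phi_ex_derive_x (true :: true :: nil) _ _ Hd)
  | exact (phi_ex_derive_x (false :: nil) _ _ Hd)
  | exact (phi_ex_derive_x (false :: true :: nil) _ _ Hd)
  | exact (phi_ex_derive_t nil _ _ Hd)
  | exact (phi_ex_derive_t (true :: nil) _ _ Hd)
  | exact (phi_ex_derive_t (true :: true :: nil) _ _ Hd)
  | exact (Hphix _ _ Hd)
  | exact (Rabs_pos_lt _ (Hphix _ _ Hd))
  | exact (Rgt_not_eq _ _ (sqrt_abs_pos _ (Hphix _ _ Hd))) ].

Definition schwarz_sol_dx (A B : R) : R -> R -> R := fun x t =>
  (A * dx phi x t - / 2 * (A * phi x t + B) * (dx (dx phi) x t / dx phi x t))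
  / sqrt (Rabs (dx phi x t)).

Definition schwarz_sol_dt (A B : R) : R -> R -> R := fun x t =>
  (A * dt phi x t - / 2 * (A * phi x t + B) * (dt (dx phi) x t / dx phi x t))
  / sqrt (Rabs (dx phi x t)).

Ltac field_schwarz Hd :=
  let h := fresh in pose proof (Hphix _ _ Hd) as h;
  rewrite ?(sign_sqrt_abs _ h);
  let s := fresh in pose proof (sqrt_abs_pos _ h) as s;
  unfold schwarz_sol, schwarz_sol_dx, schwarz_sol_dt, schwarzian, dx, dt in h, s |- *;
  real_eq; field; repeat split; try lra; auto.

Lemma is_derive_x_schwarz_sol A B x t : D x t ->
  is_derive (fun y => schwarz_sol phi A B y t) x (schwarz_sol_dx A B x t).
Proof. intros Hd. unfold schwarz_sol. auto_derive; [derivable_side Hd | field_schwarz Hd]. Qed.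

Lemma is_derive_t_schwarz_sol A B x t : D x t ->
  is_derive (fun s => schwarz_sol phi A B x s) t (schwarz_sol_dt A B x t).
Proof. intros Hd. unfold schwarz_sol. auto_derive; [derivable_side Hd | field_schwarz Hd]. Qed.

Lemma dx_schwarz_sol A B x t : D x t ->
  dx (schwarz_sol phi A B) x t = schwarz_sol_dx A B x t.
Proof. intros Hd. now apply is_derive_unique, is_derive_x_schwarz_sol. Qed.

Lemma dt_schwarz_sol A B x t : D x t ->
  dt (schwarz_sol phi A B) x t = schwarz_sol_dt A B x t.
Proof. intros Hd. now apply is_derive_unique, is_derive_t_schwarz_sol. Qed.

Lemma dx_dx_schwarz_sol A B x t : D x t ->
  dx (dx (schwarz_sol phi A B)) x t = - / 2 * schwarzian phi x t * schwarz_sol phi A B x t.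
Proof.
  intros Hd. rewrite (dx_open_ext D _ (fun y => schwarz_sol_dx A B y t))
    by (auto; intros y Hy; now apply dx_schwarz_sol).
  apply is_derive_unique. unfold schwarz_sol_dx, schwarz_sol.
  auto_derive; [derivable_side Hd | field_schwarz Hd].
Qed.

Lemma dt_dx_schwarz_sol A B x t : D x t ->
  dt (dx (schwarz_sol phi A B)) x t = dx (dt (schwarz_sol phi A B)) x t.
Proof.
  intros Hd.
  rewrite (dt_open_ext D _ (fun s => schwarz_sol_dx A B x s))
    by (auto; intros s Hs; now apply dx_schwarz_sol).
  rewrite (dx_open_ext D _ (fun y => schwarz_sol_dt A B y t))
    by (auto; intros y Hy; now apply dt_schwarz_sol).
  erewrite (is_derive_unique (fun s => schwarz_sol_dx A B x s))
    by (unfold schwarz_sol_dx; auto_derive; [derivable_side Hd | reflexivity]).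
  erewrite (is_derive_unique (fun y => schwarz_sol_dt A B y t))
    by (unfold schwarz_sol_dt; auto_derive; [derivable_side Hd | reflexivity]).
  rewrite (sign_sqrt_abs _ (Hphix x t Hd)).
  pose proof (smooth_on_dx_dt D phi x t HD Hphi Hd) as S1.
  pose proof (smooth_on_dx_dt D (dx phi) x t HD (smooth_on_dx D phi Hphi) Hd) as S2.
  unfold dx, dt in S1, S2 |- *. rewrite S1, S2. field_schwarz Hd.
Qed.

Lemma schwarz_sol_lax_regular A B : lax_regular D (schwarz_sol phi A B).
Proof.
  intros x t Hd. repeat split.
  - eexists. now apply is_derive_x_schwarz_sol.
  - apply (ex_derive_x_open_ext D _ (fun y => schwarz_sol_dx A B y t)); auto.
    + intros y Hy. symmetry. now apply dx_schwarz_sol.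
    + unfold schwarz_sol_dx. auto_derive. derivable_side Hd.
  - eexists. now apply is_derive_t_schwarz_sol.
  - apply (ex_derive_t_open_ext D _ (fun s => schwarz_sol_dx A B x s)); auto.
    + intros s Hs. symmetry. now apply dx_schwarz_sol.
    + unfold schwarz_sol_dx. auto_derive. derivable_side Hd.
  - now apply dt_dx_schwarz_sol.
Qed.

Lemma schwarz_sol_eq0 A B x0 t0 : D x0 t0 ->
  (forall x t, D x t -> schwarz_sol phi A B x t = 0) -> A = 0 /\ B = 0.
Proof.
  intros H0 HW.
  assert (Hlin : forall x t, D x t -> A * phi x t + B = 0).
  { intros x t Hd. specialize (HW x t Hd). unfold schwarz_sol in HW.
    pose proof (sqrt_abs_pos _ (Hphix x t Hd)).
    apply (Rmult_eq_reg_r (/ sqrt (Rabs (dx phi x t)))); [lra | apply Rinv_neq_0_compat; lra]. }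
  assert (HA : A * dx phi x0 t0 = 0).
  { transitivity (dx (fun x t => A * phi x t + B) x0 t0).
    - symmetry. apply is_derive_unique. auto_derive; [derivable_side H0 | unfold dx; ring].
    - rewrite (dx_open_ext D _ (fun _ => 0)) by auto. apply Derive_const. }
  apply Rmult_integral in HA. destruct HA as [HA | HA]; [|now destruct (Hphix x0 t0 H0)].
  split; [exact HA|]. specialize (Hlin x0 t0 H0). rewrite HA in Hlin. lra.
Qed.

Variable lam : R.
Hypothesis Hlam : lam <> 0.

Definition schwarz_flow : R -> R -> R := fun x t => dt phi x t / (lam * dx phi x t).

Lemma dx_schwarz_flow x t : D x t ->
  dx schwarz_flow x t =
  (dt (dx phi) x t * dx phi x t - dt phi x t * dx (dx phi) x t) / (lam * dx phi x t ^ 2).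
Proof.
  intros Hd. rewrite <- (smooth_on_dx_dt D phi x t HD Hphi Hd).
  apply is_derive_unique. unfold schwarz_flow.
  auto_derive; [derivable_side Hd; apply Rmult_integral_contrapositive_currified; auto |].
  field_schwarz Hd.
Qed.

Lemma schwarz_flow_ex_derive x t : D x t ->
  ex_derive (fun y => schwarz_flow y t) x /\ ex_derive (fun y => dx schwarz_flow y t) x.
Proof.
  intros Hd. assert (Hlx : forall y t, D y t -> lam * dx phi y t <> 0)
    by (intros; apply Rmult_integral_contrapositive_currified; auto).
  split.
  - unfold schwarz_flow. auto_derive. derivable_side Hd. auto.
  - apply (ex_derive_x_open_ext D _ (fun y =>
      (dt (dx phi) y t * dx phi y t - dt phi y t * dx (dx phi) y t) / (lam * dx phi y t ^ 2)));
      auto.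
    + intros y Hy. symmetry. now apply dx_schwarz_flow.
    + auto_derive. derivable_side Hd. apply Rmult_integral_contrapositive_currified; auto.
      apply Rmult_integral_contrapositive_currified; auto; lra.
Qed.

Lemma schwarz_sol_lax_eqs A B :
  lax_eqs D (fun x t => / 2 * schwarzian phi x t) schwarz_flow lam (schwarz_sol phi A B).
Proof.
  intros x t Hd. split.
  - rewrite dx_dx_schwarz_sol by exact Hd. ring.
  - rewrite dt_schwarz_sol, dx_schwarz_sol, dx_schwarz_flow by exact Hd.
    unfold schwarz_flow. field_schwarz Hd.
Qed.

Lemma wronskian_schwarz_sol x t : D x t ->
  wronskian (schwarz_sol phi 0 1) (schwarz_sol phi 1 0) x t = dx phi x t / Rabs (dx phi x t).
Proof.
  intros Hd. unfold wronskian. rewrite !dx_schwarz_sol by exact Hd.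
  rewrite <- (sqrt_sqrt (Rabs (dx phi x t))) by apply Rabs_pos.
  field_schwarz Hd.
Qed.
End SchwarzSolutions.

Theorem mainTheorem6 (D : R -> R -> Prop) (lam : R) (phi : R -> R -> R)
  (HDopen : open2 D) (HDconn : connected2 D) (HDne : exists x t, D x t)
  (Hlam : lam <> 0) (Hphi : smooth_on D phi)
  (Hphix : forall x t, D x t -> dx phi x t <> 0)
  (Heq : forall x t, D x t ->
     dt (schwarzian phi) x t
     + 4 / lam * dx (fun y s => dt phi y s / dx phi y s) x t = 0) :
  let p := fun x t => dt phi x t / (lam * dx phi x t) in
  let U := fun x t => / 2 * schwarzian phi x t + / lam in
  (forall V : R -> R -> R, smooth_on D V ->
     ((forall x t, D x t ->
         dx (dx V) x t + (U x t - / lam) * V x t = 0 /\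
         dt V x t = lam * (p x t * dx V x t - / 2 * dx p x t * V x t))
      <->
      exists A B : R, forall x t, D x t ->
         V x t = (A * phi x t + B) / sqrt (Rabs (dx phi x t))))
  /\
  (forall A B : R,
     (forall x t, D x t -> (A * phi x t + B) / sqrt (Rabs (dx phi x t)) = 0) ->
     A = 0 /\ B = 0).
Proof.
  intros p U. destruct HDne as [x0 [t0 H0]].
  set (k := fun x t => U x t - / lam).
  assert (Hsol : forall A B, lax_eqs D k p lam (schwarz_sol phi A B)).
  { intros A B. apply (lax_eqs_coeff_ext D (fun x t => / 2 * schwarzian phi x t)).
    - intros x t _. unfold k, U. ring.
    - now apply schwarz_sol_lax_eqs. }
  split; [intros V HV; split|].
  - intros HVeqs.
    destruct (lax_solution_span D k p lam HDopen (schwarz_flow_ex_derive D phi HDopen Hphi Hphix lam Hlam)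
      HDconn V (schwarz_sol phi 0 1) (schwarz_sol phi 1 0) x0 t0) as [a [b Hab]];
      auto using smooth_on_lax_regular, schwarz_sol_lax_regular.
    { rewrite (wronskian_schwarz_sol D phi Hphi Hphix x0 t0 H0). pose proof (Hphix x0 t0 H0).
      apply Rmult_integral_contrapositive_currified; auto.
      now apply Rinv_neq_0_compat, Rabs_no_R0. }
    exists b, a. intros x t Hd. rewrite Hab by exact Hd. unfold schwarz_sol. field.
    apply Rgt_not_eq, sqrt_abs_pos, Hphix, Hd.
  - intros [A [B HVAB]]. now apply (lax_eqs_open_ext D k p lam V (schwarz_sol phi A B)).
  - intros A B. now apply (schwarz_sol_eq0 D phi HDopen Hphi Hphix A B x0 t0).
Qed.
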